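(* Let $n\ge 1$, let $n_0>0$ and $N_+\in\mathbb{R}^n$ with positive entries, let $M_1\in\mathbb{R}$, and let $L_R\in\mathbb{R}^n$ have finite entries. For $A\in\mathbb{R}^n$ set $a_0(A)=M_1-\mathbf{1}^\top A$ and $$H(A)=A^\top\big(-L_R-\log(N_+)+\mathbf{1}\log(n_0)\big)+\sum_{i=1}^n\big(A_i\log A_i-A_i\big)+a_0(A)\log(a_0(A))-a_0(A),$$ with $\log(N_+)$ taken componentwise and the convention $0\log 0=0$, defined on $\{A\in\mathbb{R}^n: A\ge 0,\ a_0(A)\ge 0\}$. Suppose that some $A\in\mathbb{R}^n$ with $A\ge 0$ satisfies $M_1>\mathbf{1}^\top A$. Then $H$ has a unique minimizer over $A\in\mathbb{R}^n_+$ (within its domain).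
   Context: This is the Greenland–Longnecker pseudo-count problem for log relative risks: $n$ alternative exposure levels, $n_0$ total subjects at the reference exposure, $N_+$ total subjects at the alternative exposures, $M_1$ total cases, $L_R$ reported log relative risks; $A$ are pseudo-cases at alternative exposures and $a_0$ pseudo-cases at the reference exposure. The gradient of $H$ is $-L_R+\log(A)-\log(N_+)-\log(a_0(A))\mathbf{1}+\log(n_0)\mathbf{1}$. $\mathbf{1}$ denotes the all-ones vector. *)

From mathcomp Require Import all_boot all_order all_algebra.
From mathcomp Require Import reals exp.
Set Implicit Arguments. Unset Strict Implicit. Unset Printing Implicit Defensive.
Import Order.TTheory GRing.Theory Num.Theory.
Local Open Scope ring_scope.

Definition xlogx (R : realType) (x : R) : R := if x == 0 then 0 else x * ln x.

Definition a0 (R : realType) (n : nat) (M1 : R) (A : 'I_n -> R) : R :=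
  M1 - \sum_(i < n) A i.

Definition H (R : realType) (n : nat) (n0 : R) (Nplus : 'I_n -> R) (M1 : R)
    (LR : 'I_n -> R) (A : 'I_n -> R) : R :=
  \sum_(i < n) A i * (- LR i - ln (Nplus i) + ln n0)
  + \sum_(i < n) (xlogx (A i) - A i)
  + xlogx (a0 M1 A) - a0 M1 A.

Definition Hdom (R : realType) (n : nat) (M1 : R) (A : 'I_n -> R) : Prop :=
  (forall i, 0 <= A i) /\ 0 <= a0 M1 A.

From mathcomp Require Import all_boot all_order all_algebra.
From mathcomp Require Import reals exp.
From mathcomp Require Import boolp sequences ring lra.
Import Order.TTheory GRing.Theory Num.Theory.
Set Implicit Arguments. Unset Strict Implicit. Unset Printing Implicit Defensive.
Local Open Scope ring_scope.

(* With c_i := - L_R,i - log N_+,i + log n_0, put w_i := exp (- c_i),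
   q := M_1 / (1 + sum_i w_i) and P_i := q w_i, so that a_0(P) = q.
   Completing the entropy gives
   H(B) = sum_i D(B_i, P_i) + D(a_0(B), q) + M_1 log q - M_1, where
   D(b, p) = b log b - b log p - b + p is the generalized Kullback-Leibler
   divergence.  As exp t >= 1 + t, strictly for t <> 0, D(b, p) >= 0 with
   equality iff b = p; hence P is the only point where H attains its
   lower bound M_1 log q - M_1. *)

Section KullbackLeibler.
Context {R : realType}.

Definition kldiv (b p : R) : R := xlogx b - b * ln p - b + p.

Lemma kldiv0 (p : R) : kldiv 0 p = p.
Proof. by rewrite /kldiv /xlogx eqxx; ring. Qed.

Lemma kldivxx (p : R) : 0 < p -> kldiv p p = 0.
Proof. by move=> p_gt0; rewrite /kldiv /xlogx gt_eqF //; ring. Qed.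

Lemma kldiv_expR (b p : R) : 0 < b -> 0 < p ->
  kldiv b p = b * (expR (ln p - ln b) - 1 - (ln p - ln b)).
Proof.
move=> b_gt0 p_gt0.
rewrite expRD expRN !lnK ?posrE // /kldiv /xlogx gt_eqF //.
by rewrite !mulrDr mulrCA divff ?gt_eqF //; ring.
Qed.

Lemma kldiv_ge0 (b p : R) : 0 <= b -> 0 < p -> 0 <= kldiv b p.
Proof.
rewrite le_eqVlt => /predU1P[<- p_gt0|b_gt0 p_gt0]; first by rewrite kldiv0 ltW.
rewrite kldiv_expR // mulr_ge0 ?(ltW b_gt0) //.
by have := expR_ge1Dx (ln p - ln b); lra.
Qed.

Lemma kldiv_eq0 (b p : R) : 0 <= b -> 0 < p -> kldiv b p = 0 -> b = p.
Proof.
rewrite le_eqVlt => /predU1P[<- p_gt0|b_gt0 p_gt0]; first by rewrite kldiv0; lra.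
rewrite kldiv_expR // => /eqP; rewrite mulf_eq0 gt_eqF //= subr_eq0 => /eqP E.
have [ln_eq|ln_neq] := eqVneq (ln p - ln b) 0.
  by apply: ln_inj; rewrite ?posrE //; apply/eqP; rewrite eq_sym -subr_eq0 ln_eq.
by have := expR_gt1Dx ln_neq; lra.
Qed.

End KullbackLeibler.

Section EntropyMinimization.
Context {R : realType} {n : nat}.
Variables (c : 'I_n -> R) (M1 : R).
Hypothesis M1_gt0 : 0 < M1.

Definition entropy_objective (B : 'I_n -> R) : R :=
  \sum_(i < n) B i * c i + \sum_(i < n) (xlogx (B i) - B i)
  + xlogx (a0 M1 B) - a0 M1 B.

Let w i := expR (- c i).
Let q := M1 / (1 + \sum_(i < n) w i).

Definition entropy_argmin (i : 'I_n) : R := q * w i.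
Local Notation P := entropy_argmin.

Let sumw_ge0 : 0 <= \sum_(i < n) w i.
Proof. by apply: sumr_ge0 => i _; rewrite ltW ?expR_gt0. Qed.

Let q_gt0 : 0 < q.
Proof. by rewrite divr_gt0 //; have := sumw_ge0; lra. Qed.

Lemma entropy_argmin_gt0 i : 0 < P i.
Proof. by rewrite mulr_gt0 ?expR_gt0. Qed.

Lemma ln_entropy_argmin i : ln (P i) = ln q - c i.
Proof. by rewrite lnM ?posrE ?expR_gt0 // expRK. Qed.

Lemma a0_entropy_argmin : a0 M1 P = q.
Proof.
have q1W : q * (1 + \sum_(i < n) w i) = M1.
  by rewrite divfK // gt_eqF //; have := sumw_ge0; lra.
by rewrite /a0 -mulr_sumr; rewrite mulrDr mulr1 in q1W; lra.
Qed.

Lemma Hdom_entropy_argmin : Hdom M1 P.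
Proof.
by split=> [i|]; rewrite ?a0_entropy_argmin ltW ?entropy_argmin_gt0.
Qed.

Lemma entropy_objective_kldiv B : entropy_objective B =
  \sum_(i < n) kldiv (B i) (P i) + kldiv (a0 M1 B) q + M1 * ln q - M1.
Proof.
have sumP : \sum_(i < n) P i = M1 - q by rewrite -a0_entropy_argmin /a0; ring.
have -> : \sum_(i < n) kldiv (B i) (P i) =
    \sum_(i < n) (xlogx (B i) - B i) + \sum_(i < n) B i * c i
    - ln q * \sum_(i < n) B i + (M1 - q).
  rewrite -sumP mulr_sumr -sumrN -!big_split /=.
  by apply: eq_bigr => i _; rewrite /kldiv ln_entropy_argmin; ring.
rewrite /entropy_objective /kldiv /a0; ring.
Qed.

Lemma entropy_objective_argmin : entropy_objective P = M1 * ln q - M1.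
Proof.
rewrite entropy_objective_kldiv a0_entropy_argmin kldivxx // big1 => [|i _].
  by ring.
exact/kldivxx/entropy_argmin_gt0.
Qed.

Let sum_kldiv_ge0 B : Hdom M1 B -> 0 <= \sum_(i < n) kldiv (B i) (P i).
Proof.
move=> [B_ge0 _]; apply: sumr_ge0 => i _.
exact: kldiv_ge0 (B_ge0 i) (entropy_argmin_gt0 i).
Qed.

Lemma entropy_objective_ge_argmin B :
  Hdom M1 B -> entropy_objective P <= entropy_objective B.
Proof.
move=> domB; rewrite entropy_objective_argmin entropy_objective_kldiv.
have := sum_kldiv_ge0 domB; have := kldiv_ge0 domB.2 q_gt0; lra.
Qed.

Lemma entropy_argmin_unique B :
  Hdom M1 B -> entropy_objective B <= entropy_objective P -> B = P.
Proof.
move=> domB; rewrite entropy_objective_argmin entropy_objective_kldiv => B_le.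
have sum0 : \sum_(i < n) kldiv (B i) (P i) = 0.
  by have := sum_kldiv_ge0 domB; have := kldiv_ge0 domB.2 q_gt0; lra.
have [B_ge0 _] := domB.
apply/funext => i; apply: kldiv_eq0 (B_ge0 i) (entropy_argmin_gt0 i) _.
move/psumr_eq0P: sum0; apply=> // j _.
exact: kldiv_ge0 (B_ge0 j) (entropy_argmin_gt0 j).
Qed.

End EntropyMinimization.

Theorem theorem2 (R : realType) (n : nat) (n0 : R) (Nplus : 'I_n -> R)
    (M1 : R) (LR : 'I_n -> R) :
  (1 <= n)%N -> 0 < n0 -> (forall i, 0 < Nplus i) ->
  (exists A : 'I_n -> R, (forall i, 0 <= A i) /\ \sum_(i < n) A i < M1) ->
  exists A : 'I_n -> R,
    (Hdom M1 A /\ forall B, Hdom M1 B -> H n0 Nplus M1 LR A <= H n0 Nplus M1 LR B) /\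
    forall A', (Hdom M1 A' /\ forall B, Hdom M1 B -> H n0 Nplus M1 LR A' <= H n0 Nplus M1 LR B) -> A' = A.
Proof.
move=> _ _ _ [A0 [A0_ge0 sumA0_lt]].
have M1_gt0 : 0 < M1 by apply: le_lt_trans sumA0_lt; exact: sumr_ge0.
pose c i := - LR i - ln (Nplus i) + ln n0.
have H_def : H n0 Nplus M1 LR = entropy_objective c M1 by [].
rewrite H_def; exists (entropy_argmin c M1); split.
  split; first exact: Hdom_entropy_argmin.
  exact: entropy_objective_ge_argmin.
move=> A' [domA' A'_min].
apply: entropy_argmin_unique => //.
exact/A'_min/Hdom_entropy_argmin.
Qed.
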